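(* For all $m\ge2$, $n\ge2$ there exists a proportional mechanism $(A,q)$ for the goods allocation problem over the set $\mathcal{N}$ of normalized instances such that $\min_{i\in[m]}v_i(A(v)_i)=\mathrm{OPT}(v)$ for every $v\in\mathcal{N}$.
   Context: Goods allocation: $m$ agents $[m]$, $n$ goods $[n]$; an instance is a matrix $v\in\mathbb{R}_{\ge0}^{m\times n}$, $v_i(S)=\sum_{j\in S}v_{i,j}$. Normalized instances: $\mathcal{N}=\{v\in\mathbb{R}_{\ge0}^{m\times n}:\exists C\text{ with }v_i([n])=C\ \forall i\in[m]\}$. An allocation is a tuple of pairwise disjoint subsets of $[n]$ with union $[n]$. A mechanism $(A,q)$ assigns to each instance an allocation $A(v)$ and transfers $q(v)\in\mathbb{R}^m$; it is proportional if for every instance $v$ and $i\in[m]$: $v_i(A_i)-q_i\ge\frac1m\sum_{j\in[m]}(v_i(A_j)-q_j)$. $\mathrm{OPT}(v)=\max_X\min_{i\in[m]}v_i(X_i)$ over all allocations $X$. *)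

From HB Require Import structures.
From mathcomp Require Import all_boot all_order all_algebra.
From mathcomp Require Import reals.
Set Implicit Arguments. Unset Strict Implicit. Unset Printing Implicit Defensive.
Import Order.TTheory GRing.Theory Num.Theory.
Local Open Scope ring_scope.

Section Defs.
Variables (R : realType) (m n : nat).

(* An instance is an m x n matrix v; agent i values good j at v i j. *)
Definition val (v : 'M[R]_(m, n)) (i : 'I_m) (S : {set 'I_n}) : R :=
  \sum_(j in S) v i j.

Definition normalized (v : 'M[R]_(m, n)) : Prop :=
  (forall i j, 0 <= v i j) /\ exists C : R, forall i, val v i setT = C.

Definition is_allocation (X : {ffun 'I_m -> {set 'I_n}}) : bool :=
  [forall i, forall j, (i != j) ==> [disjoint X i & X j]]
  && (\bigcup_(i < m) X i == setT).

Definition seqmin (s : seq R) : R := foldr Num.min (head 0 s) s.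
Definition seqmax (s : seq R) : R := foldr Num.max (head 0 s) s.

Definition egal (v : 'M[R]_(m, n)) (X : {ffun 'I_m -> {set 'I_n}}) : R :=
  seqmin [seq val v i (X i) | i <- enum 'I_m].

Definition OPT (v : 'M[R]_(m, n)) : R :=
  seqmax [seq egal v X | X <- enum [pred X : {ffun 'I_m -> {set 'I_n}} | is_allocation X]].

Definition proportional_at (A : 'M[R]_(m, n) -> {ffun 'I_m -> {set 'I_n}})
    (q : 'M[R]_(m, n) -> 'I_m -> R) (v : 'M[R]_(m, n)) : Prop :=
  forall i : 'I_m,
    val v i (A v i) - q v i >=
    m%:R^-1 * \sum_(j < m) (val v i (A v j) - q v j).

End Defs.

From Pilot Require Import Defs.
From HB Require Import structures.
From mathcomp Require Import all_boot all_order all_algebra perm.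
From mathcomp Require Import reals.
Set Implicit Arguments. Unset Strict Implicit. Unset Printing Implicit Defensive.
Import Order.TTheory GRing.Theory Num.Theory.

(* The mechanism picks, among the allocations maximising min_i v_i(A_i), one of
   maximal welfare sum_i v_i(A_i), and charges every agent the value of its own
   bundle. Each agent then has utility 0, so proportionality says exactly that
   the welfare is at least the common total value C. If it were smaller, every
   agent j would value some bundle A_k more than its owner k does (otherwise
   C = sum_k v_j(A_k) <= welfare). Following "j envies the bundle of f j" from
   any agent ends in a cycle; rotating the bundles along it raises the welfare
   strictly while every agent keeps a value at least the old minimum, contradicting
   the choice of A. *)

Section FoldrExtrema.
Variables (disp : Order.disp_t) (T : orderType disp).

Lemma foldr_min_mem (d : T) (s : seq T) : foldr Order.min d s \in d :: s.
Proof.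
rewrite foldrE big_seq; apply: (big_ind (fun y => y \in d :: s : Prop)) => [|x y xs ys|x xs]; rewrite ?mem_head //.
  by rewrite minEle; case: ifP.
by rewrite inE xs orbT.
Qed.

Lemma foldr_max_mem (d : T) (s : seq T) : foldr Order.max d s \in d :: s.
Proof.
rewrite foldrE big_seq; apply: (big_ind (fun y => y \in d :: s : Prop)) => [|x y xs ys|x xs]; rewrite ?mem_head //.
  by rewrite maxEle; case: ifP.
by rewrite inE xs orbT.
Qed.

Lemma foldr_min_le (d : T) (s : seq T) x : x \in d :: s -> (foldr Order.min d s <= x)%O.
Proof.
elim: s => [|a s IH] xs; first by move: xs; rewrite inE => /eqP ->.
rewrite /= ge_min; have [->|xa] := eqVneq x a; first by rewrite lexx.
by rewrite IH ?orbT //; move: xs; rewrite !inE (negbTE xa).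
Qed.

Lemma le_foldr_max (d : T) (s : seq T) x : x \in d :: s -> (x <= foldr Order.max d s)%O.
Proof.
elim: s => [|a s IH] xs; first by move: xs; rewrite inE => /eqP ->.
rewrite /= le_max; have [->|xa] := eqVneq x a; first by rewrite lexx.
by rewrite IH ?orbT //; move: xs; rewrite !inE (negbTE xa).
Qed.

End FoldrExtrema.

Local Open Scope ring_scope.

Section SeqExtrema.
Variable R : realType.
Implicit Type s : seq R.

Lemma seqmin_mem s : s != [::] -> seqmin s \in s.
Proof.
case: s => // a s _; change (foldr Num.min a (a :: s) \in a :: s).
by have /predU1P [->|] := foldr_min_mem a (a :: s); rewrite ?mem_head.
Qed.

Lemma seqmax_mem s : s != [::] -> seqmax s \in s.
Proof.
case: s => // a s _; change (foldr Num.max a (a :: s) \in a :: s).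
by have /predU1P [->|] := foldr_max_mem a (a :: s); rewrite ?mem_head.
Qed.

Lemma seqmin_le s x : x \in s -> seqmin s <= x.
Proof. by case: s => // a s xs; apply: foldr_min_le; rewrite inE xs orbT. Qed.

Lemma le_seqmax s x : x \in s -> x <= seqmax s.
Proof. by case: s => // a s xs; apply: le_foldr_max; rewrite inE xs orbT. Qed.

End SeqExtrema.

Section PeriodicPoints.
Variables (T : finType) (f : T -> T).

Definition periodic x := fconnect f (f x) x.

Lemma periodicP x : reflect (exists k, iter k.+1 f x = x) (periodic x).
Proof.
apply: (iffP idP) => [/iter_findex fx|[k fkx]].
  by exists (findex f (f x) x); rewrite iterSr.
by rewrite /periodic -{2}fkx iterSr fconnect_iter.
Qed.

Lemma periodicF x : periodic x -> periodic (f x).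
Proof. by case/periodicP => k fkx; apply/periodicP; exists k; rewrite -iterSr iterS fkx. Qed.

Lemma exists_periodic (x : T) : exists y, periodic y.
Proof.
have /trajectP [k lt_k_ord fox] := looping_order f x.
exists (iter k f x); apply/periodicP; exists (order f x - k).-1.
by rewrite prednK ?subn_gt0 // -iterD subnK ?(ltnW lt_k_ord).
Qed.

Definition cycle_step x := if periodic x then f x else x.

(* Periodic points with equal images coincide: iterate up to a common period. *)
Lemma cycle_step_inj : injective cycle_step.
Proof.
move=> x y; rewrite /cycle_step.
have [px|npx] := boolP (periodic x); have [py|npy] := boolP (periodic y) => //.
- case/periodicP: px => a fax; case/periodicP: py => b fby fxy.
  have iterM_fix z c k : iter c.+1 f z = z -> iter (c.+1 * k) f z = z.
    by move=> fz; elim: k => [|k IH]; rewrite ?muln0 // mulnS iterD IH fz.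
  rewrite -(iterM_fix x a b.+1) // -(iterM_fix y b a.+1) //.
  by rewrite mulnC mulSn addSn !iterSr fxy.
- by move=> fxy; move: npy; rewrite -fxy periodicF.
- by move=> fxy; move: npx; rewrite fxy periodicF.
Qed.

Lemma cycle_step_periodic x : periodic x -> cycle_step x = f x.
Proof. by rewrite /cycle_step => ->. Qed.

Lemma cycle_stepE x : cycle_step x = x \/ cycle_step x = f x.
Proof. by rewrite /cycle_step; case: periodic; [right|left]. Qed.

End PeriodicPoints.

Section Allocations.
Variables (R : realType) (m n : nat).
Hypothesis m_gt0 : (0 < m)%N.
Implicit Types (v : 'M[R]_(m, n)) (X Y Z : {ffun 'I_m -> {set 'I_n}}).

Definition welfare v X := \sum_(i < m) Defs.val v i (X i).

Lemma egal_le_val v X i : egal v X <= Defs.val v i (X i).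
Proof. by apply: seqmin_le; apply: map_f; rewrite mem_enum. Qed.

Lemma le_egal v X t : (forall i, t <= Defs.val v i (X i)) -> t <= egal v X.
Proof.
move=> tX; have : egal v X \in [seq Defs.val v i (X i) | i <- enum 'I_m].
  by apply: seqmin_mem; rewrite -size_eq0 size_map size_enum_ord -lt0n.
by case/mapP => i _ ->.
Qed.

Lemma egal_le_OPT v X : is_allocation X -> egal v X <= OPT v.
Proof. by move=> HX; apply: le_seqmax; apply: map_f; rewrite mem_enum. Qed.

Lemma sum_val_allocation v X i :
  is_allocation X -> \sum_(j < m) Defs.val v i (X j) = Defs.val v i setT.
Proof.
case/andP => /forallP disjX /eqP coverX.
have disj j k : j != k -> [disjoint X j & X k].
  by move=> jk; move/forallP: (disjX j) => /(_ k); rewrite jk.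
by rewrite /Defs.val -coverX (partition_disjoint_bigcup _ _ disj).
Qed.

Lemma allocation_perm X (g : {perm 'I_m}) :
  is_allocation X -> is_allocation [ffun i => X (g i)].
Proof.
case/andP => /forallP disjX /eqP coverX; apply/andP; split.
  apply/forallP => i; apply/forallP => j; apply/implyP => ij; rewrite !ffunE.
  have gij : g i != g j by rewrite (inj_eq perm_inj).
  by move/forallP: (disjX (g i)) => /(_ (g j)); rewrite gij.
apply/eqP; rewrite -coverX [RHS](reindex_inj (@perm_inj _ g)) /=.
by apply: eq_bigr => i _; rewrite ffunE.
Qed.

Lemma exists_envied_bundle v Y j : is_allocation Y ->
  welfare v Y < Defs.val v j setT ->
  exists k, Defs.val v k (Y k) < Defs.val v j (Y k).
Proof.
move=> HY; rewrite -(sum_val_allocation v j HY) ltNge => /negP noenvy.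
have [k envy|none] := pickP (fun k => Defs.val v k (Y k) < Defs.val v j (Y k)).
  by exists k.
by case: noenvy; apply: ler_sum => k _; rewrite leNgt none.
Qed.

Lemma welfare_improving_cycle v Y (f : 'I_m -> 'I_m) : is_allocation Y ->
  (forall j, Defs.val v (f j) (Y (f j)) < Defs.val v j (Y (f j))) ->
  exists Z, [/\ is_allocation Z, egal v Y <= egal v Z & welfare v Y < welfare v Z].
Proof.
move=> HY envy; have [x px] := exists_periodic f (Ordinal m_gt0).
pose g := perm (@cycle_step_inj _ f).
have gE j : g j = j \/ g j = f j by rewrite permE; apply: cycle_stepE.
have gx : g x = f x by rewrite permE cycle_step_periodic.
exists [ffun j => Y (g j)]; split; first exact: allocation_perm.
  apply: le_egal => j; rewrite ffunE; case: (gE j) => ->; first exact: egal_le_val.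
  exact/ltW/(le_lt_trans (egal_le_val v Y (f j)))/envy.
rewrite /welfare (reindex_inj (@perm_inj _ g)) /=.
rewrite (bigD1 x) // [X in _ < X](bigD1 x) //= ffunE gx; apply: ltr_leD => //.
by apply: ler_sum => j _; rewrite ffunE; case: (gE j) => ->; [|apply/ltW].
Qed.

Lemma le_welfare_equal_totals v Y C : (forall j, Defs.val v j setT = C) ->
  is_allocation Y ->
  (forall Z, is_allocation Z -> egal v Y <= egal v Z -> welfare v Z <= welfare v Y) ->
  C <= welfare v Y.
Proof.
move=> totC HY Ymax; rewrite leNgt; apply/negP => lowC.
have /fin_all_exists [f envy] j : exists k, Defs.val v k (Y k) < Defs.val v j (Y k).
  by apply: exists_envied_bundle; rewrite ?totC.
have [Z [HZ egalZ welfZ]] := welfare_improving_cycle HY envy.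
by move: welfZ; rewrite ltNge Ymax.
Qed.

Lemma proportional_at_own_value_transfers A v : is_allocation (A v) ->
  (forall i, Defs.val v i setT <= welfare v (A v)) ->
  proportional_at A (fun v i => Defs.val v i (A v i)) v.
Proof.
move=> HA welf_ge i; rewrite subrr sumrB (sum_val_allocation v i HA).
by rewrite mulr_ge0_le0 ?invr_ge0 ?ler0n // subr_le0 welf_ge.
Qed.

Definition give_all : {ffun 'I_m -> {set 'I_n}} :=
  [ffun i => if i == Ordinal m_gt0 then setT else set0].

Lemma give_all_allocation : is_allocation give_all.
Proof.
apply/andP; split.
  apply/forallP => i; apply/forallP => j; apply/implyP => ij; rewrite !ffunE.
  case: eqP => [ei|_]; last by rewrite -setI_eq0 set0I.
  by case: eqP => [ej|_]; [rewrite ei ej eqxx in ij | rewrite -setI_eq0 setI0].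
rewrite eqEsubset subsetT /=; apply: (subset_trans _ (bigcup_sup (Ordinal m_gt0) _)) => //.
by rewrite ffunE eqxx.
Qed.

Definition maxmin_alloc v := [arg max_(X > give_all | is_allocation X) egal v X]%O.

Lemma maxmin_allocP v : is_allocation (maxmin_alloc v) /\ egal v (maxmin_alloc v) = OPT v.
Proof.
rewrite /maxmin_alloc; case: arg_maxP => [|X HX Xmax]; first exact: give_all_allocation.
split => //; apply/eqP; rewrite eq_le egal_le_OPT //=.
have : OPT v \in [seq egal v Y | Y <- enum [pred Y | is_allocation Y]].
  by apply: seqmax_mem; apply/eqP => /(congr1 (fun s => egal v X \in s)); rewrite map_f ?mem_enum.
by case/mapP => Y; rewrite mem_enum => /Xmax + ->.
Qed.

Definition mechanism v :=
  [arg max_(X > maxmin_alloc v | is_allocation X && (egal v X == OPT v)) welfare v X]%O.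

Lemma mechanismP v : [/\ is_allocation (mechanism v), egal v (mechanism v) = OPT v &
  forall Z, is_allocation Z -> egal v (mechanism v) <= egal v Z ->
    welfare v Z <= welfare v (mechanism v)].
Proof.
have [H0 E0] := maxmin_allocP v.
rewrite /mechanism; case: arg_maxP => [|X /andP [HX /eqP EX] Xmax].
  by rewrite H0 E0 eqxx.
split=> // Z HZ; rewrite EX => ge_egal; apply: Xmax.
by rewrite HZ eq_le egal_le_OPT.
Qed.

End Allocations.

Theorem mainTheorem9 (R : realType) (m n : nat) :
  (2 <= m)%N -> (2 <= n)%N ->
  exists (A : 'M[R]_(m, n) -> {ffun 'I_m -> {set 'I_n}})
         (q : 'M[R]_(m, n) -> 'I_m -> R),
    (forall v, normalized v -> is_allocation (A v)) /\
    (forall v, normalized v -> proportional_at A q v) /\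
    (forall v, normalized v -> egal v (A v) = OPT v).
Proof.
move=> m_ge2 _; have m_gt0 : (0 < m)%N by apply: ltnW.
pose A := @mechanism R m n m_gt0.
exists A, (fun v i => Defs.val v i (A v i)).
split; [|split] => v nv; have [A_alloc A_OPT A_max] := mechanismP m_gt0 v => //.
apply: proportional_at_own_value_transfers => // i.
case: nv => _ [C totC]; rewrite totC.
exact: le_welfare_equal_totals totC A_alloc A_max.
Qed.
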